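(* Let $X$ be an object of the category $\mathbf{Rng}$ of not necessarily unital (associative) rings. Then $X$ is unitary (has a multiplicative identity) if and only if $X$ is proto-complete, if and only if $X$ is complete, if and only if $X$ is complete${}^*$, if and only if $X$ is strong-complete (in $\mathbf{Rng}$).
   Context: In a pointed category: a normal monomorphism is a kernel of some morphism; a protosplit monomorphism is a kernel of a split epimorphism; a monomorphism $m:S\to Y$ is Bourn-normal if there is an equivalence relation $(R,r_1,r_2)$ on $Y$ and $\tilde m:S\times S\to R$ with $r_1\tilde m=m\pi_1$, $r_2\tilde m=m\pi_2$ and the square $r_1\tilde m=m\pi_1$ a pullback. An object $X$ is proto-complete if every protosplit monomorphism with domain $X$ is a split monomorphism; complete if every normal monomorphism with domain $X$ is a split monomorphism; complete${}^*$ if every Bourn-normal monomorphism with domain $X$ is a split monomorphism; strong-complete if every protosplit monomorphism with domain $X$ is a split monomorphism with a unique retraction. Morphisms in $\mathbf{Rng}$ are ring homomorphisms not required to preserve identities. *)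

(* Morphisms are represented as
   functions together with the predicate [is_hom]; equality of morphisms
   is pointwise equality [feq]. *)
Set Implicit Arguments.
Unset Strict Implicit.

Record rng := Rng {
  car :> Type;
  rzero : car;
  radd : car -> car -> car;
  ropp : car -> car;
  rmul : car -> car -> car;
  raddA : forall x y z, radd x (radd y z) = radd (radd x y) z;
  raddC : forall x y, radd x y = radd y x;
  radd0 : forall x, radd rzero x = x;
  raddN : forall x, radd (ropp x) x = rzero;
  rmulA : forall x y z, rmul x (rmul y z) = rmul (rmul x y) z;
  rmulDl : forall x y z, rmul (radd x y) z = radd (rmul x z) (rmul y z);
  rmulDr : forall x y z, rmul x (radd y z) = radd (rmul x y) (rmul x z)
}.

Arguments rzero {r}.

Definition is_hom (X Y : rng) (f : X -> Y) : Prop :=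
  (forall x y, f (radd x y) = radd (f x) (f y)) /\
  (forall x y, f (rmul x y) = rmul (f x) (f y)).

Definition feq (A B : Type) (f g : A -> B) : Prop := forall x, f x = g x.

Definition comp (A B C : Type) (g : B -> C) (f : A -> B) : A -> C :=
  fun x => g (f x).

Section Prod.
Variables A B : rng.
Definition pzero : A * B := (rzero, rzero).
Definition padd (p q : A * B) : A * B := (radd (fst p) (fst q), radd (snd p) (snd q)).
Definition popp (p : A * B) : A * B := (ropp (fst p), ropp (snd p)).
Definition pmul (p q : A * B) : A * B := (rmul (fst p) (fst q), rmul (snd p) (snd q)).
Lemma paddA x y z : padd x (padd y z) = padd (padd x y) z.
Proof. unfold padd; simpl; now rewrite !raddA. Qed.
Lemma paddC x y : padd x y = padd y x.
Proof. unfold padd; now rewrite (raddC (fst x)), (raddC (snd x)). Qed.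
Lemma padd0 x : padd pzero x = x.
Proof. unfold padd, pzero; simpl; rewrite !radd0; now destruct x. Qed.
Lemma paddN x : padd (popp x) x = pzero.
Proof. unfold padd, popp, pzero; simpl; now rewrite !raddN. Qed.
Lemma pmulA x y z : pmul x (pmul y z) = pmul (pmul x y) z.
Proof. unfold pmul; simpl; now rewrite !rmulA. Qed.
Lemma pmulDl x y z : pmul (padd x y) z = padd (pmul x z) (pmul y z).
Proof. unfold pmul, padd; simpl; now rewrite !rmulDl. Qed.
Lemma pmulDr x y z : pmul x (padd y z) = padd (pmul x y) (pmul x z).
Proof. unfold pmul, padd; simpl; now rewrite !rmulDr. Qed.
Definition prod_rng : rng :=
  @Rng (A * B)%type pzero padd popp pmul paddA paddC padd0 paddN
       pmulA pmulDl pmulDr.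
Definition pi1 : prod_rng -> A := fun p => fst p.
Definition pi2 : prod_rng -> B := fun p => snd p.
End Prod.

Definition unitary (X : rng) : Prop :=
  exists e : X, forall x : X, rmul e x = x /\ rmul x e = x.

Definition mono (S Y : rng) (m : S -> Y) : Prop :=
  is_hom m /\
  forall (W : rng) (g h : W -> S), is_hom g -> is_hom h ->
    feq (comp m g) (comp m h) -> feq g h.

(* m is a kernel of f (Rng is pointed; zero morphism = constant 0). *)
Definition is_kernel (S Y Z : rng) (m : S -> Y) (f : Y -> Z) : Prop :=
  is_hom m /\ is_hom f /\ (forall s, f (m s) = rzero) /\
  forall (W : rng) (g : W -> Y), is_hom g -> (forall w, f (g w) = rzero) ->
    exists h : W -> S, is_hom h /\ feq (comp m h) g /\
      forall h' : W -> S, is_hom h' -> feq (comp m h') g -> feq h' h.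

Definition normal_mono (S Y : rng) (m : S -> Y) : Prop :=
  exists (Z : rng) (f : Y -> Z), is_kernel m f.

Definition split_epi (Y B : rng) (p : Y -> B) : Prop :=
  is_hom p /\ exists s : B -> Y, is_hom s /\ feq (comp p s) (fun b => b).

Definition protosplit_mono (S Y : rng) (m : S -> Y) : Prop :=
  exists (B : rng) (p : Y -> B), split_epi p /\ is_kernel m p.

Definition split_mono (S Y : rng) (m : S -> Y) : Prop :=
  is_hom m /\ exists r : Y -> S, is_hom r /\ feq (comp r m) (fun s => s).

(* Internal equivalence relation (R, r1, r2) on Y, stated with
   generalized elements. *)
Definition equiv_rel (Y R : rng) (r1 r2 : R -> Y) : Prop :=
  is_hom r1 /\ is_hom r2 /\
  (forall (W : rng) (g h : W -> R), is_hom g -> is_hom h ->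
     feq (comp r1 g) (comp r1 h) -> feq (comp r2 g) (comp r2 h) -> feq g h) /\
  (exists d : Y -> R, is_hom d /\ feq (comp r1 d) (fun y => y) /\
                       feq (comp r2 d) (fun y => y)) /\
  (exists s : R -> R, is_hom s /\ feq (comp r1 s) r2 /\ feq (comp r2 s) r1) /\
  (forall (W : rng) (a b : W -> R), is_hom a -> is_hom b ->
     feq (comp r2 a) (comp r1 b) ->
     exists t : W -> R, is_hom t /\ feq (comp r1 t) (comp r1 a) /\
                         feq (comp r2 t) (comp r2 b)).

Definition bourn_normal (S Y : rng) (m : S -> Y) : Prop :=
  mono m /\
  exists (R : rng) (r1 r2 : R -> Y) (mt : prod_rng S S -> R),
    equiv_rel r1 r2 /\ is_hom mt /\
    feq (comp r1 mt) (comp m (@pi1 S S)) /\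
    feq (comp r2 mt) (comp m (@pi2 S S)) /\
    (* the square r1 mt = m pi1 is a pullback *)
    (forall (W : rng) (a : W -> R) (b : W -> S), is_hom a -> is_hom b ->
       feq (comp r1 a) (comp m b) ->
       exists h : W -> prod_rng S S, is_hom h /\ feq (comp mt h) a /\
         feq (comp (@pi1 S S) h) b /\
         forall h' : W -> prod_rng S S, is_hom h' -> feq (comp mt h') a ->
           feq (comp (@pi1 S S) h') b -> feq h' h).

Definition proto_complete (X : rng) : Prop :=
  forall (Y : rng) (m : X -> Y), protosplit_mono m -> split_mono m.

Definition complete (X : rng) : Prop :=
  forall (Y : rng) (m : X -> Y), normal_mono m -> split_mono m.

Definition complete_star (X : rng) : Prop :=
  forall (Y : rng) (m : X -> Y), bourn_normal m -> split_mono m.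

Definition strong_complete (X : rng) : Prop :=
  forall (Y : rng) (m : X -> Y), protosplit_mono m ->
    is_hom m /\
    exists r : Y -> X, is_hom r /\ feq (comp r m) (fun x => x) /\
      forall r' : Y -> X, is_hom r' -> feq (comp r' m) (fun x => x) -> feq r' r.

From Stdlib Require Import ZArith Lia ProofIrrelevance ClassicalEpsilon.

(* If [X] has an identity [e], every injective homomorphism [m : X -> Y] whose
   image is a two-sided ideal has the unique retraction [y |-> m^-1 (m e * y)],
   because [m e] is a central idempotent of [Y]. Kernels are such embeddings,
   and so are Bourn-normal monomorphisms, whose image is the class of [0].
   Conversely, [X] is the kernel of the split projection onto [Z] of its Dorroh
   extension [X x Z], with [(a, n) (b, k) = (a b + n b + k a, n k)], and it is
   Bourn-normal there via the kernel pair [(X x X) x Z] of that projection; if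
   this inclusion has a retraction [r], then [r (0, 1)] is an identity of [X]. *)

Definition additive {A B : rng} (f : A -> B) : Prop :=
  forall x y, f (radd x y) = radd (f x) (f y).

Definition injective {A B : Type} (f : A -> B) : Prop :=
  forall x y, f x = f y -> x = y.

Section RngTheory.
Context {A : rng}.
Implicit Types x y z : A.

Lemma addr0 x : radd x rzero = x.
Proof. rewrite raddC; apply radd0. Qed.

Lemma addrN x : radd x (ropp x) = rzero.
Proof. rewrite raddC; apply raddN. Qed.

Lemma addrCA x y z : radd x (radd y z) = radd y (radd x z).
Proof. rewrite !raddA, (raddC x y); reflexivity. Qed.

Lemma addrACA (a b c d : A) :
  radd (radd a b) (radd c d) = radd (radd a c) (radd b d).
Proof. rewrite <- !raddA, (addrCA b); reflexivity. Qed.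

Lemma addrI x y z : radd x y = radd x z -> y = z.
Proof.
  intros E. rewrite <- (radd0 y), <- (radd0 z), <- (raddN x), <- !raddA, E.
  reflexivity.
Qed.

Lemma subr0_eq x y : radd x (ropp y) = rzero -> x = y.
Proof. intros E. rewrite <- (addr0 x), <- (raddN y), raddA, E; apply radd0. Qed.

Lemma oppr0 : ropp (@rzero A) = rzero.
Proof. rewrite <- (radd0 (ropp rzero)); apply addrN. Qed.

Lemma opprD x y : ropp (radd x y) = radd (ropp x) (ropp y).
Proof.
  apply addrI with (radd x y). rewrite addrN, addrACA, !addrN; symmetry; apply radd0.
Qed.

Lemma subrDr x y z : radd (radd x z) (ropp (radd y z)) = radd x (ropp y).
Proof. rewrite opprD, addrACA, addrN, addr0; reflexivity. Qed.

Lemma mul0r x : rmul rzero x = rzero.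
Proof. apply addrI with (rmul rzero x). rewrite <- rmulDl, radd0, addr0; reflexivity. Qed.

Lemma mulr0 x : rmul x rzero = rzero.
Proof. apply addrI with (rmul x rzero). rewrite <- rmulDr, radd0, addr0; reflexivity. Qed.

End RngTheory.

Section Additive.
Context {A B : rng} {f : A -> B}.
Hypothesis Hf : additive f.

Lemma additive0 : f rzero = rzero.
Proof. apply addrI with (f rzero). rewrite <- Hf, radd0, addr0; reflexivity. Qed.

Lemma additiveN x : f (ropp x) = ropp (f x).
Proof. apply addrI with (f x). rewrite <- Hf, !addrN; apply additive0. Qed.

End Additive.

(* [ac] proves an equation between two sums of the same terms, up to
   associativity and commutativity of [radd]. *)
Ltac ac_pull a r :=
  lazymatch r with
  | radd a ?c => constr:(@eq_refl _ r)
  | radd ?b a => constr:(raddC b a)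
  | radd ?b ?c =>
      let p := ac_pull a c in
      lazymatch type of p with
      | _ = radd a ?c' => constr:(eq_trans (f_equal (radd b) p) (addrCA b a c'))
      end
  end.
Ltac ac_match :=
  first
    [ reflexivity
    | lazymatch goal with
      | |- radd ?a ?l = ?r =>
          let p := ac_pull a r in
          lazymatch type of p with
          | _ = radd a ?r' =>
              refine (eq_trans _ (eq_sym p)); apply (f_equal (radd a)); ac_match
          end
      end ].
Ltac ac := repeat rewrite <- raddA; ac_match.

Definition Zrng : rng :=
  @Rng Z 0%Z Z.add Z.opp Z.mul Z.add_assoc Z.add_comm Z.add_0_l Z.add_opp_diag_l
    Z.mul_assoc Z.mul_add_distr_r Z.mul_add_distr_l.

Section IntegerMultiples.
Context {A : rng}.

Fixpoint nmul (n : nat) (x : A) : A :=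
  match n with O => rzero | S n => radd x (nmul n x) end.

(* [Z.to_nat] truncates negative integers to [0], so one of the two terms vanishes. *)
Definition zmul (n : Z) (x : A) : A :=
  radd (nmul (Z.to_nat n) x) (ropp (nmul (Z.to_nat (- n)) x)).

Lemma nmulD a b x : nmul (a + b) x = radd (nmul a x) (nmul b x).
Proof.
  induction a as [|a IH]; simpl.
  - symmetry; apply radd0.
  - rewrite IH; apply raddA.
Qed.

Lemma zmul_nat_sub a b x :
  zmul (Z.of_nat a - Z.of_nat b) x = radd (nmul a x) (ropp (nmul b x)).
Proof.
  unfold zmul.
  assert (E : (a + Z.to_nat (- (Z.of_nat a - Z.of_nat b))
               = b + Z.to_nat (Z.of_nat a - Z.of_nat b))%nat) by lia.
  revert E.
  generalize (Z.to_nat (Z.of_nat a - Z.of_nat b)) (Z.to_nat (- (Z.of_nat a - Z.of_nat b))).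
  intros c d E.
  rewrite <- (subrDr (nmul c x) (nmul d x) (nmul b x)).
  rewrite <- (subrDr (nmul a x) (nmul b x) (nmul d x)).
  rewrite <- !nmulD, E, (Nat.add_comm c b), (Nat.add_comm d b).
  reflexivity.
Qed.

Lemma zmul0 x : zmul 0 x = rzero.
Proof. unfold zmul; simpl. rewrite oppr0; apply radd0. Qed.

Lemma zmul1 x : zmul 1 x = x.
Proof. unfold zmul; simpl. rewrite oppr0, !addr0; reflexivity. Qed.

Lemma zmulDl n m x : zmul (n + m) x = radd (zmul n x) (zmul m x).
Proof.
  replace (n + m)%Z with (Z.of_nat (Z.to_nat n + Z.to_nat m)
                          - Z.of_nat (Z.to_nat (- n) + Z.to_nat (- m)))%Z by lia.
  rewrite zmul_nat_sub, !nmulD, opprD. unfold zmul; apply addrACA.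
Qed.

(* [Z] is the free abelian group on [1]. *)
Lemma Z_additive_zmul (g : Z -> A) x :
  (forall n m, g (n + m)%Z = radd (g n) (g m)) -> g 1%Z = x ->
  forall n, g n = zmul n x.
Proof.
  intros Hg H1 n.
  assert (Hg' : @additive Zrng A g) by exact Hg.
  assert (Hnat : forall k, g (Z.of_nat k) = nmul k x).
  { induction k as [|k IH].
    - apply (additive0 Hg').
    - replace (Z.of_nat (S k)) with (1 + Z.of_nat k)%Z by lia.
      rewrite Hg, IH, H1; reflexivity. }
  assert (E : n = @radd Zrng (Z.of_nat (Z.to_nat n)) (@ropp Zrng (Z.of_nat (Z.to_nat (- n))))).
  { simpl; lia. }
  rewrite E at 1. rewrite Hg', (additiveN Hg'), !Hnat. reflexivity.
Qed.

End IntegerMultiples.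

Lemma additive_zmul {A B : rng} (f : A -> B) n x :
  additive f -> f (zmul n x) = zmul n (f x).
Proof.
  intros Hf. apply (Z_additive_zmul (fun k => f (zmul k x))).
  - intros k k'. rewrite zmulDl; apply Hf.
  - rewrite zmul1; reflexivity.
Qed.

Lemma zmulM {A : rng} n m (x : A) : zmul (n * m) x = zmul n (zmul m x).
Proof.
  apply (Z_additive_zmul (fun k => zmul (k * m) x)).
  - intros k k'. rewrite Z.mul_add_distr_r; apply zmulDl.
  - rewrite Z.mul_1_l; reflexivity.
Qed.

Lemma zmulDr {A : rng} n (x y : A) : zmul n (radd x y) = radd (zmul n x) (zmul n y).
Proof.
  symmetry. apply (Z_additive_zmul (fun k => radd (zmul k x) (zmul k y))).
  - intros k k'. rewrite !zmulDl; apply addrACA.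
  - rewrite !zmul1; reflexivity.
Qed.

Lemma zmulr0 {A : rng} n : zmul n (@rzero A) = rzero.
Proof. apply additive0. intros x y; apply zmulDr. Qed.

Lemma rmul_zmull {A : rng} n (x y : A) : rmul (zmul n x) y = zmul n (rmul x y).
Proof. apply (additive_zmul (fun z => rmul z y)). intros a b; apply rmulDl. Qed.

Lemma rmul_zmulr {A : rng} n (x y : A) : rmul x (zmul n y) = zmul n (rmul x y).
Proof. apply (additive_zmul (fun z => rmul x z)). intros a b; apply rmulDr. Qed.

Lemma zmul_pair {A B : rng} n (p : prod_rng A B) :
  zmul n p = (zmul n (fst p), zmul n (snd p)).
Proof.
  change (zmul n p = (zmul n (pi1 p), zmul n (pi2 p))).
  rewrite <- !additive_zmul by (intros ? ?; reflexivity).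
  apply surjective_pairing.
Qed.

Section Dorroh.
Context {A : rng}.
Implicit Types p q : A * Z.

Definition dor_zero : A * Z := (rzero, 0%Z).
Definition dor_add p q : A * Z := (radd (fst p) (fst q), (snd p + snd q)%Z).
Definition dor_opp p : A * Z := (ropp (fst p), (- snd p)%Z).
Definition dor_mul p q : A * Z :=
  (radd (rmul (fst p) (fst q)) (radd (zmul (snd p) (fst q)) (zmul (snd q) (fst p))),
   (snd p * snd q)%Z).

Lemma dor_addA p q r : dor_add p (dor_add q r) = dor_add (dor_add p q) r.
Proof. unfold dor_add; simpl; f_equal; [apply raddA | lia]. Qed.

Lemma dor_addC p q : dor_add p q = dor_add q p.
Proof. unfold dor_add; f_equal; [apply raddC | lia]. Qed.

Lemma dor_add0 p : dor_add dor_zero p = p.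
Proof. destruct p; unfold dor_add; simpl; rewrite radd0; reflexivity. Qed.

Lemma dor_addN p : dor_add (dor_opp p) p = dor_zero.
Proof. unfold dor_add, dor_zero; simpl; f_equal; [apply raddN | lia]. Qed.

Lemma dor_mulA p q r : dor_mul p (dor_mul q r) = dor_mul (dor_mul p q) r.
Proof.
  destruct p as [a n], q as [b k], r as [c l]; unfold dor_mul; simpl; f_equal; [|ring].
  rewrite ?rmulDl, ?rmulDr, ?zmulDr, ?rmul_zmull, ?rmul_zmulr, ?rmulA, <- ?zmulM.
  rewrite (Z.mul_comm l n), (Z.mul_comm l k). ac.
Qed.

Lemma dor_mulDl p q r : dor_mul (dor_add p q) r = dor_add (dor_mul p r) (dor_mul q r).
Proof.
  destruct p as [a n], q as [b k], r as [c l]; unfold dor_mul, dor_add; simpl.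
  f_equal; [|ring].
  rewrite rmulDl, zmulDl, zmulDr. ac.
Qed.

Lemma dor_mulDr p q r : dor_mul p (dor_add q r) = dor_add (dor_mul p q) (dor_mul p r).
Proof.
  destruct p as [a n], q as [b k], r as [c l]; unfold dor_mul, dor_add; simpl.
  f_equal; [|ring].
  rewrite rmulDr, zmulDl, zmulDr. ac.
Qed.

End Dorroh.

Definition dorroh (A : rng) : rng :=
  @Rng (A * Z) dor_zero dor_add dor_opp dor_mul
    dor_addA dor_addC dor_add0 dor_addN dor_mulA dor_mulDl dor_mulDr.

Lemma comp_hom {A B C : rng} {g : B -> C} {f : A -> B} :
  is_hom g -> is_hom f -> is_hom (comp g f).
Proof.
  intros [Hg1 Hg2] [Hf1 Hf2]; unfold comp; split; intros x y.
  - rewrite Hf1; apply Hg1.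
  - rewrite Hf2; apply Hg2.
Qed.

Lemma zero_hom (W A : rng) : is_hom (fun _ : W => @rzero A).
Proof. split; intros _ _; symmetry; [apply radd0 | apply mul0r]. Qed.

Section KernelObject.
Context {A B : rng} {f : A -> B}.
Hypothesis Hf : is_hom f.

Definition ker_car : Type := {a : A | f a = rzero}.

Lemma ker_eq (u v : ker_car) : proj1_sig u = proj1_sig v -> u = v.
Proof. apply eq_sig_hprop; intros; apply proof_irrelevance. Qed.

Lemma ker_zero_closed : f rzero = rzero.
Proof. exact (additive0 (proj1 Hf)). Qed.

Lemma ker_add_closed (u v : ker_car) : f (radd (proj1_sig u) (proj1_sig v)) = rzero.
Proof. rewrite (proj1 Hf), (proj2_sig u), (proj2_sig v); apply radd0. Qed.

Lemma ker_opp_closed (u : ker_car) : f (ropp (proj1_sig u)) = rzero.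
Proof. rewrite (additiveN (proj1 Hf)), (proj2_sig u); apply oppr0. Qed.

Lemma ker_mul_closed (u v : ker_car) : f (rmul (proj1_sig u) (proj1_sig v)) = rzero.
Proof. rewrite (proj2 Hf), (proj2_sig u); apply mul0r. Qed.

Definition ker_rng : rng.
Proof.
  refine (@Rng ker_car (exist _ rzero ker_zero_closed)
            (fun u v => exist _ _ (ker_add_closed u v))
            (fun u => exist _ _ (ker_opp_closed u))
            (fun u v => exist _ _ (ker_mul_closed u v)) _ _ _ _ _ _ _);
    intros; apply ker_eq; simpl.
  - apply raddA.
  - apply raddC.
  - apply radd0.
  - apply raddN.
  - apply rmulA.
  - apply rmulDl.
  - apply rmulDr.
Defined.

Definition ker_incl : ker_rng -> A := fun u => proj1_sig u.

Lemma ker_incl_hom : is_hom ker_incl.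
Proof. split; reflexivity. Qed.

Lemma ker_incl_ker u : f (ker_incl u) = rzero.
Proof. exact (proj2_sig u). Qed.

Definition ker_elt (a : A) (Ha : f a = rzero) : ker_rng := exist _ a Ha.

End KernelObject.

Lemma mono_injective {S Y : rng} {m : S -> Y} : mono m -> injective m.
Proof.
  intros [Hm Hmono] a b Eab.
  assert (Hm0 : m rzero = rzero) by exact (additive0 (proj1 Hm)).
  assert (Hker : feq (ker_incl Hm) (fun _ => rzero)).
  { apply (Hmono _ _ _ (ker_incl_hom Hm) (zero_hom _ _)).
    intros u; unfold comp; rewrite ker_incl_ker; auto. }
  assert (Hab : m (radd a (ropp b)) = rzero).
  { rewrite (proj1 Hm), (additiveN (proj1 Hm)), Eab; apply addrN. }
  apply subr0_eq, (Hker (ker_elt Hm _ Hab)).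
Qed.

Lemma injective_mono {S Y : rng} {m : S -> Y} : is_hom m -> injective m -> mono m.
Proof. intros Hm Hinj; split; [exact Hm|]. intros W g h _ _ E w; apply Hinj, E. Qed.

Lemma kernel_mono {S Y Z : rng} {m : S -> Y} {f : Y -> Z} : is_kernel m f -> mono m.
Proof.
  intros [Hm [Hf [Hfm Huniv]]]; split; [exact Hm|].
  intros W g h Hg Hh E.
  destruct (Huniv W (comp m g) (comp_hom Hm Hg) (fun w => Hfm (g w))) as [k [_ [_ Hk]]].
  intros w. rewrite (Hk g Hg (fun _ => eq_refl) w), (Hk h Hh (fun w => eq_sym (E w)) w).
  reflexivity.
Qed.

Lemma kernel_image {S Y Z : rng} {m : S -> Y} {f : Y -> Z} y :
  is_kernel m f -> f y = rzero -> exists x, m x = y.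
Proof.
  intros [_ [Hf [_ Huniv]]] Hy.
  destruct (Huniv _ _ (ker_incl_hom Hf) (ker_incl_ker Hf)) as [h [_ [Hh _]]].
  exists (h (ker_elt Hf y Hy)); apply Hh.
Qed.

Record ideal_embedding {S Y : rng} (m : S -> Y) : Prop := {
  ie_hom : is_hom m;
  ie_inj : injective m;
  ie_mulr : forall x y, exists z, m z = rmul (m x) y;
  ie_mull : forall x y, exists z, m z = rmul y (m x)
}.

Arguments ie_hom {S Y m}.
Arguments ie_inj {S Y m}.
Arguments ie_mulr {S Y m}.
Arguments ie_mull {S Y m}.

Section UnitaryRetraction.
Context {S Y : rng} {m : S -> Y}.
Hypothesis Hm : ideal_embedding m.
Variable e : S.
Hypothesis He : forall x, rmul e x = x /\ rmul x e = x.

Lemma unit_image_idem : rmul (m e) (m e) = m e.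
Proof. rewrite <- (proj2 (ie_hom Hm)), (proj1 (He e)); reflexivity. Qed.

(* Both [m e * y] and [y * m e] lie in the image of [m], on which [m e] is a
   two-sided identity; hence both equal [m e * y * m e]. *)
Lemma unit_image_central y : rmul (m e) y = rmul y (m e).
Proof.
  destruct (ie_mulr Hm e y) as [a Ea], (ie_mull Hm e y) as [b Eb].
  assert (Hl : forall x, rmul (m e) (m x) = m x).
  { intros x; rewrite <- (proj2 (ie_hom Hm)), (proj1 (He x)); reflexivity. }
  assert (Hr : forall x, rmul (m x) (m e) = m x).
  { intros x; rewrite <- (proj2 (ie_hom Hm)), (proj2 (He x)); reflexivity. }
  rewrite <- Ea, <- Eb, <- (Hr a), <- (Hl b), Ea, Eb. symmetry; apply rmulA.
Qed.

Definition retraction (y : Y) : S :=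
  proj1_sig (constructive_indefinite_description _ (ie_mulr Hm e y)).

Lemma retractionE y : m (retraction y) = rmul (m e) y.
Proof. exact (proj2_sig (constructive_indefinite_description _ (ie_mulr Hm e y))). Qed.

Lemma retraction_hom : is_hom retraction.
Proof.
  destruct Hm as [[Hadd Hmul] Hinj _ _].
  split; intros y y'; apply Hinj.
  - rewrite Hadd, !retractionE; apply rmulDr.
  - rewrite Hmul, !retractionE, <- rmulA, (rmulA y), <- unit_image_central.
    rewrite <- !rmulA, (rmulA (m e) (m e)), unit_image_idem; reflexivity.
Qed.

Lemma retraction_cancel : feq (comp retraction m) (fun x => x).
Proof.
  intros x; unfold comp; apply (ie_inj Hm).
  rewrite retractionE, <- (proj2 (ie_hom Hm)), (proj1 (He x)); reflexivity.
Qed.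

Lemma retraction_unique (r : Y -> S) :
  is_hom r -> feq (comp r m) (fun x => x) -> feq r retraction.
Proof.
  intros Hr Hrm y.
  (* r y = r y * r (m e) = r (m e * y) = r (m (retraction y)) *)
  rewrite <- (proj2 (He (r y))), <- (Hrm e) at 1; unfold comp.
  rewrite <- (proj2 Hr), <- unit_image_central, <- retractionE.
  apply Hrm.
Qed.

End UnitaryRetraction.

Lemma unitary_ideal_embedding_retraction {S Y : rng} {m : S -> Y} :
  unitary S -> ideal_embedding m ->
  exists r : Y -> S, is_hom r /\ feq (comp r m) (fun x => x) /\
    forall r' : Y -> S, is_hom r' -> feq (comp r' m) (fun x => x) -> feq r' r.
Proof.
  intros [e He] Hm. exists (retraction Hm e).
  split; [|split].
  - apply retraction_hom, He.
  - apply retraction_cancel, He.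
  - intros r'; apply retraction_unique, He.
Qed.

Lemma unitary_ideal_embedding_split {S Y : rng} {m : S -> Y} :
  unitary S -> ideal_embedding m -> split_mono m.
Proof.
  intros Hu Hm. split; [exact (ie_hom Hm)|].
  destruct (unitary_ideal_embedding_retraction Hu Hm) as [r [Hr [Hrm _]]].
  exists r; split; assumption.
Qed.

Lemma kernel_ideal_embedding {S Y Z : rng} {m : S -> Y} {f : Y -> Z} :
  is_kernel m f -> ideal_embedding m.
Proof.
  intros Hk. pose proof Hk as [Hm [Hf [Hfm _]]].
  split.
  - exact Hm.
  - exact (mono_injective (kernel_mono Hk)).
  - intros x y. apply (kernel_image _ Hk).
    rewrite (proj2 Hf), Hfm; apply mul0r.
  - intros x y. apply (kernel_image _ Hk).
    rewrite (proj2 Hf), Hfm; apply mulr0.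
Qed.

Section BournNormalIdeal.
Context {S Y R : rng} {m : S -> Y} {r1 r2 : R -> Y} {mt : prod_rng S S -> R}.
Hypotheses (Hm : is_hom m) (Hr1 : is_hom r1) (Hr2 : is_hom r2).
Hypothesis Hmt1 : feq (comp r1 mt) (comp m (@pi1 S S)).
Hypothesis Hmt2 : feq (comp r2 mt) (comp m (@pi2 S S)).
Hypothesis Hpb : forall (W : rng) (a : W -> R) (b : W -> S), is_hom a -> is_hom b ->
  feq (comp r1 a) (comp m b) -> exists h : W -> prod_rng S S, feq (comp mt h) a.

Lemma zero_class_in_image rho : r1 rho = rzero -> exists x, m x = r2 rho.
Proof.
  intros Hrho.
  assert (Hsq : feq (comp r1 (ker_incl Hr1)) (comp m (fun _ => rzero))).
  { intros u; unfold comp; rewrite ker_incl_ker; symmetry; exact (additive0 (proj1 Hm)). }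
  destruct (Hpb _ _ _ (ker_incl_hom Hr1) (zero_hom _ _) Hsq) as [h Hh].
  set (u := ker_elt Hr1 rho Hrho).
  exists (pi2 (h u)). change (m (pi2 (h u)) = r2 (ker_incl Hr1 u)).
  rewrite <- (Hh u); symmetry; apply Hmt2.
Qed.

(* [mt (0, x)] relates [0] to [m x], so multiplying it by the diagonal image of
   [y] relates [0] to [m x * y] and to [y * m x]. *)
Lemma bourn_image_ideal (d : Y -> R) :
  feq (comp r1 d) (fun y => y) -> feq (comp r2 d) (fun y => y) ->
  (forall x y, exists z, m z = rmul (m x) y) /\
  (forall x y, exists z, m z = rmul y (m x)).
Proof.
  intros Hd1 Hd2.
  assert (Hm0 : m rzero = rzero) by exact (additive0 (proj1 Hm)).
  unfold feq, comp, pi1, pi2 in *.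
  split; intros x y.
  - destruct (zero_class_in_image (rmul (mt (rzero, x)) (d y))) as [z Hz].
    { rewrite (proj2 Hr1), Hmt1, Hd1; simpl; rewrite Hm0; apply mul0r. }
    exists z; rewrite Hz, (proj2 Hr2), Hmt2, Hd2; reflexivity.
  - destruct (zero_class_in_image (rmul (d y) (mt (rzero, x)))) as [z Hz].
    { rewrite (proj2 Hr1), Hmt1, Hd1; simpl; rewrite Hm0; apply mulr0. }
    exists z; rewrite Hz, (proj2 Hr2), Hmt2, Hd2; reflexivity.
Qed.

End BournNormalIdeal.

Lemma bourn_normal_ideal_embedding {S Y : rng} {m : S -> Y} :
  bourn_normal m -> ideal_embedding m.
Proof.
  intros [Hmono [R [r1 [r2 [mt [Heq [_ [Hmt1 [Hmt2 Hpb]]]]]]]]].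
  destruct Heq as [Hr1 [Hr2 [_ [[d [_ [Hd1 Hd2]]] _]]]].
  assert (Hpb' : forall (W : rng) (a : W -> R) (b : W -> S), is_hom a -> is_hom b ->
    feq (comp r1 a) (comp m b) -> exists h : W -> prod_rng S S, feq (comp mt h) a).
  { intros W a b Ha Hb Hab.
    destruct (Hpb W a b Ha Hb Hab) as [h [_ [Hh _]]]. exists h; exact Hh. }
  destruct (bourn_image_ideal (proj1 Hmono) Hr1 Hr2 Hmt1 Hmt2 Hpb' d Hd1 Hd2) as [Hmulr Hmull].
  split; [exact (proj1 Hmono) | exact (mono_injective Hmono) | exact Hmulr | exact Hmull].
Qed.

Definition dor_inj (A : rng) : A -> dorroh A := fun a => (a, 0%Z).
Definition dor_proj (A : rng) : dorroh A -> Zrng := fun p => snd p.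
Definition dor_sect (A : rng) : Zrng -> dorroh A := fun n => (rzero, n).

Lemma dor_fst_hom {W A : rng} {g : W -> dorroh A} :
  is_hom g -> (forall w, snd (g w) = 0%Z) -> is_hom (fun w => fst (g w)).
Proof.
  intros [Hg1 Hg2] Hg0; split; intros x y.
  - rewrite Hg1; reflexivity.
  - rewrite Hg2; simpl; rewrite !Hg0, !zmul0, radd0; apply addr0.
Qed.

Lemma dor_inj_hom (A : rng) : is_hom (dor_inj A).
Proof.
  split; intros x y; simpl; unfold dor_add, dor_mul; simpl; [reflexivity|].
  rewrite !zmul0, radd0, addr0; reflexivity.
Qed.

Lemma dor_inj_kernel (A : rng) : is_kernel (dor_inj A) (dor_proj A).
Proof.
  split; [apply dor_inj_hom|]. split; [split; reflexivity|]. split; [reflexivity|].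
  intros W g Hg Hg0. exists (fun w => fst (g w)). split; [|split].
  - exact (dor_fst_hom Hg Hg0).
  - intros w; specialize (Hg0 w); unfold comp, dor_inj, dor_proj in *.
    destruct (g w); simpl in *; subst; reflexivity.
  - intros h _ Hh w. rewrite <- (Hh w); reflexivity.
Qed.

Lemma dor_proj_split_epi (A : rng) : split_epi (dor_proj A).
Proof.
  split; [split; reflexivity|]. exists (dor_sect A). split; [split|].
  - intros n k; simpl; unfold dor_add; simpl; rewrite radd0; reflexivity.
  - intros n k; simpl; unfold dor_mul; simpl; rewrite mul0r, !zmulr0, !radd0; reflexivity.
  - intros n; reflexivity.
Qed.

Lemma dor_inj_protosplit (A : rng) : protosplit_mono (dor_inj A).
Proof.
  exists Zrng, (dor_proj A). split; [apply dor_proj_split_epi | apply dor_inj_kernel].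
Qed.

Lemma dor_inj_split_unitary (A : rng) : split_mono (dor_inj A) -> unitary A.
Proof.
  intros [_ [r [[_ Hr] Hrm]]]. exists (r (rzero, 1%Z)). intros x.
  assert (Hx : r (x, 0%Z) = x) by apply Hrm.
  assert (Hl : @rmul (dorroh A) (rzero, 1%Z) (x, 0%Z) = (x, 0%Z)).
  { cbn [rmul dorroh]; unfold dor_mul; simpl.
    rewrite mul0r, zmul1, zmul0, radd0, addr0; reflexivity. }
  assert (Hr' : @rmul (dorroh A) (x, 0%Z) (rzero, 1%Z) = (x, 0%Z)).
  { cbn [rmul dorroh]; unfold dor_mul; simpl.
    rewrite mulr0, zmul1, zmulr0, radd0, radd0; reflexivity. }
  split; rewrite <- Hx at 1; rewrite <- Hr; [rewrite Hl | rewrite Hr']; exact Hx.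
Qed.

Definition dor_map {A B : rng} (f : A -> B) : dorroh A -> dorroh B :=
  fun p => (f (fst p), snd p).

Lemma dor_map_hom {A B : rng} {f : A -> B} : is_hom f -> is_hom (dor_map f).
Proof.
  intros [Hf1 Hf2]; split; intros [a n] [b k]; unfold dor_map; simpl;
    unfold dor_add, dor_mul; simpl; f_equal.
  - apply Hf1.
  - rewrite !Hf1, Hf2, !(additive_zmul f) by exact Hf1; reflexivity.
Qed.

(* [dorroh (A x B)] is the pullback of the two projections onto [Z]. *)
Definition dor_pair {W A B : rng} (u : W -> dorroh A) (v : W -> dorroh B) :
  W -> dorroh (prod_rng A B) :=
  fun w => ((fst (u w), fst (v w)), snd (u w)).

Lemma dor_pair_hom {W A B : rng} {u : W -> dorroh A} {v : W -> dorroh B} :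
  is_hom u -> is_hom v -> (forall w, snd (u w) = snd (v w)) -> is_hom (dor_pair u v).
Proof.
  intros [Hu1 Hu2] [Hv1 Hv2] Huv; unfold dor_pair; split; intros x y.
  - rewrite Hu1, Hv1; reflexivity.
  - rewrite Hu2, Hv2; cbn [rmul dorroh]; unfold dor_mul; cbn [fst snd].
    rewrite !zmul_pair; cbn [radd rmul prod_rng padd pmul fst snd].
    rewrite !Huv; reflexivity.
Qed.

Definition dor_kp1 (X : rng) : dorroh (prod_rng X X) -> dorroh X := dor_map (@pi1 X X).
Definition dor_kp2 (X : rng) : dorroh (prod_rng X X) -> dorroh X := dor_map (@pi2 X X).

Lemma dor_kernel_pair_equiv_rel (X : rng) : equiv_rel (dor_kp1 X) (dor_kp2 X).
Proof.
  assert (Hr1 : is_hom (dor_kp1 X)) by (apply dor_map_hom; split; reflexivity).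
  assert (Hr2 : is_hom (dor_kp2 X)) by (apply dor_map_hom; split; reflexivity).
  split; [exact Hr1|]. split; [exact Hr2|]. split; [|split; [|split]].
  - intros W g h _ _ E1 E2 w. specialize (E1 w); specialize (E2 w).
    unfold comp, dor_kp1, dor_kp2, dor_map, pi1, pi2 in *.
    destruct (g w) as [[a b] n], (h w) as [[c d] k]; simpl in *.
    injection E1; injection E2; intros; subst; reflexivity.
  - exists (dor_pair (fun y => y) (fun y => y)).
    split; [apply dor_pair_hom; [split; reflexivity .. | reflexivity]|].
    split; intros [a n]; reflexivity.
  - exists (dor_pair (dor_kp2 X) (dor_kp1 X)). split; [apply dor_pair_hom; auto|].
    split; intros [[a b] n]; reflexivity.
  - intros W a b Ha Hb Eab.
    assert (Hn : forall w, snd (a w) = snd (b w))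
      by (intros w; exact (f_equal snd (Eab w))).
    exists (dor_pair (comp (dor_kp1 X) a) (comp (dor_kp2 X) b)).
    split; [apply dor_pair_hom; [apply comp_hom; auto .. | exact Hn]|].
    split; intros w; unfold comp, dor_pair, dor_kp1, dor_kp2, dor_map; simpl;
      rewrite ?Hn; reflexivity.
Qed.

Lemma dor_inj_bourn_normal (X : rng) : bourn_normal (dor_inj X).
Proof.
  split; [apply injective_mono; [apply dor_inj_hom | intros a b E; injection E; auto]|].
  exists (dorroh (prod_rng X X)), (dor_kp1 X), (dor_kp2 X), (dor_inj (prod_rng X X)).
  split; [apply dor_kernel_pair_equiv_rel|]. split; [apply dor_inj_hom|].
  split; [intros ?; reflexivity|]. split; [intros ?; reflexivity|].
  intros W a b Ha _ Eab.
  assert (Ha0 : forall w, snd (a w) = 0%Z) by (intros w; exact (f_equal snd (Eab w))).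
  exists (fun w => fst (a w)). split; [exact (dor_fst_hom Ha Ha0)|]. split; [|split].
  - intros w; unfold comp, dor_inj; rewrite <- (Ha0 w); symmetry; apply surjective_pairing.
  - intros w; exact (f_equal fst (Eab w)).
  - intros h _ Hh _ w; rewrite <- (Hh w); reflexivity.
Qed.

Lemma unitary_complete (X : rng) : unitary X -> complete X.
Proof.
  intros Hu Y m [Z [f Hk]].
  exact (unitary_ideal_embedding_split Hu (kernel_ideal_embedding Hk)).
Qed.

Lemma unitary_complete_star (X : rng) : unitary X -> complete_star X.
Proof.
  intros Hu Y m Hm.
  exact (unitary_ideal_embedding_split Hu (bourn_normal_ideal_embedding Hm)).
Qed.

Lemma unitary_strong_complete (X : rng) : unitary X -> strong_complete X.
Proof.
  intros Hu Y m [B [p [_ Hk]]].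
  split; [exact (proj1 Hk)|].
  exact (unitary_ideal_embedding_retraction Hu (kernel_ideal_embedding Hk)).
Qed.

Lemma complete_proto_complete (X : rng) : complete X -> proto_complete X.
Proof. intros H Y m [B [p [_ Hk]]]. apply H. exists B, p; exact Hk. Qed.

Lemma strong_complete_proto_complete (X : rng) : strong_complete X -> proto_complete X.
Proof.
  intros H Y m Hm. destruct (H Y m Hm) as [Hhom [r [Hr [Hrm _]]]].
  split; [exact Hhom|]. exists r; split; assumption.
Qed.

Lemma proto_complete_unitary (X : rng) : proto_complete X -> unitary X.
Proof. intros H. apply dor_inj_split_unitary, H, dor_inj_protosplit. Qed.

Lemma complete_star_unitary (X : rng) : complete_star X -> unitary X.
Proof. intros H. apply dor_inj_split_unitary, H, dor_inj_bourn_normal. Qed.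

Theorem proposition4p9 (X : rng) :
  (unitary X <-> proto_complete X) /\
  (unitary X <-> complete X) /\
  (unitary X <-> complete_star X) /\
  (unitary X <-> strong_complete X).
Proof.
  split; [|split; [|split]]; split; intros H.
  - apply complete_proto_complete, unitary_complete, H.
  - apply proto_complete_unitary, H.
  - apply unitary_complete, H.
  - apply proto_complete_unitary, complete_proto_complete, H.
  - apply unitary_complete_star, H.
  - apply complete_star_unitary, H.
  - apply unitary_strong_complete, H.
  - apply proto_complete_unitary, strong_complete_proto_complete, H.
Qed.
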